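(* Let $p$ be a prime and let $\Psi\colon\mathbb{Z}_p\times\mathbb{Z}_p\to\operatorname{Aut}\mathbb{Z}_{p^2}$ be a group homomorphism. Then for any $b_1,b_p\in\mathbb{Z}_p\times\mathbb{Z}_p$ there is at most one relative Rota--Baxter operator $B\colon\mathbb{Z}_{p^2}\to\mathbb{Z}_p\times\mathbb{Z}_p$ with respect to $(\mathbb{Z}_p\times\mathbb{Z}_p,\Psi)$ such that $B(1)=b_1$ and $B(p)=b_p$. Moreover, if $p>2$, then every relative Rota--Baxter operator $B\colon\mathbb{Z}_{p^2}\to\mathbb{Z}_p\times\mathbb{Z}_p$ with respect to $(\mathbb{Z}_p\times\mathbb{Z}_p,\Psi)$ is a group homomorphism.
   Context: $\mathbb{Z}_m$ denotes the cyclic group of order $m$, written additively. A relative Rota--Baxter operator on $H$ with respect to $(G,\Psi)$, where $\Psi\colon G\to\operatorname{Aut}H$ is a homomorphism, is a map $B\colon H\to G$ with $B(h)B(k)=B(h\Psi_{B(h)}(k))$ for all $h,k\in H$; here in additive notation: $B(h)+B(k)=B(h+\Psi_{B(h)}(k))$. *)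

From mathcomp Require Import all_boot all_algebra.
Set Implicit Arguments. Unset Strict Implicit. Unset Printing Implicit Defensive.
Import GRing.Theory.
Local Open Scope ring_scope.

(* Groups are written additively: abelian groups as zmodTypes. *)

Definition is_aut (H : zmodType) (f : H -> H) : Prop :=
  {morph f : x y / x + y} /\ bijective f.

Definition aut_hom (G H : zmodType) (Psi : G -> H -> H) : Prop :=
  (forall g, is_aut (Psi g)) /\
  (forall g g' x, Psi (g + g') x = Psi g (Psi g' x)).

Definition rel_RB (G H : zmodType) (Psi : G -> H -> H) (B : H -> G) : Prop :=
  forall h k, B h + B k = B (h + Psi (B h) k).

Definition grp_hom (H G : zmodType) (B : H -> G) : Prop :=
  {morph B : x y / x + y}.

From mathcomp Require Import all_boot all_algebra.
From mathcomp Require Import ring.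
Set Implicit Arguments. Unset Strict Implicit. Unset Printing Implicit Defensive.
Import GRing.Theory.
Local Open Scope ring_scope.

(* Write P for p in Z_(p^2), so that P * P = 0, and b := B 1.  As G has exponent p,
   each Psi g is multiplication by some u with u^p = 1, so u = 1 + P a by Fermat's
   little theorem and Psi g fixes every multiple of P.  Iterating the Rota--Baxter
   identity along h_(n+1) = h_n + Psi (n b) 1 gives B h_n = n b, where
   h_n = n + P a binomial(n, 2).  Every h is h_n + P j with n = h mod p, and
   B (h_n + P j) = n b + j B(P) because Psi (B h_n) fixes P j: so B is determined
   by b and B(P).  For p > 2, p divides binomial(p, 2), so h_p = P and
   B(P) = p b = 0; hence B h = h b is additive. *)

Lemma morph_add0 (V : zmodType) (f : V -> V) :
  {morph f : x y / x + y} -> f 0 = 0.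
Proof. by move=> fD; apply: (@addrI _ (f 0)); rewrite -fD !addr0. Qed.

Lemma morph_addMn (V : zmodType) (f : V -> V) :
  {morph f : x y / x + y} -> forall x n, f (x *+ n) = f x *+ n.
Proof.
move=> fD x; elim => [|n IHn]; first by rewrite !mulr0n morph_add0.
by rewrite !mulrS fD IHn.
Qed.

Lemma mulrn_modn (V : zmodType) (x : V) p m : x *+ p = 0 -> x *+ (m %% p) = x *+ m.
Proof.
move=> xp; rewrite {2}(divn_eq m p) mulrnDr.
by rewrite mulnC mulrnA xp mul0rn add0r.
Qed.

Lemma prime_sqr_gt1 p : prime p -> (1 < p ^ 2)%N.
Proof.
by move=> pp; rewrite (ltn_trans (prime_gt1 pp)) // -{1}(expn1 p) ltn_exp2l ?prime_gt1.
Qed.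

Lemma Zp_morph_mul1 n (f : 'Z_n -> 'Z_n) :
  {morph f : x y / x + y} -> forall x, f x = x * f 1.
Proof.
by move=> fD x; rewrite -{1}(natr_Zp x) (morph_addMn fD) -mulr_natr natr_Zp mulrC.
Qed.

Lemma Zp_sqr_unity_root p (u : 'Z_(p ^ 2)) : prime p ->
  u ^+ p = 1 -> exists a, u = 1 + p%:R * a.
Proof.
move=> pp up; have p_gt1 := prime_gt1 pp; have p2_gt1 := prime_sqr_gt1 pp.
have : (u ^ p %% p ^ 2 = 1)%N.
  have uE : u = (val u)%:R by rewrite natr_Zp.
  by have := congr1 (@nat_of_ord _) up; rewrite {1}uE -natrX val_Zp_nat // => ->.
move=> /(congr1 (modn^~ p)); rewrite modn_dvdm ?dvdn_exp //.
rewrite fermat_little // (modn_small p_gt1) => u_mod_p.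
exists (u %/ p)%:R.
by rewrite -{1}(natr_Zp u) {1}(divn_eq u p) u_mod_p natrD natrM addrC mulrC.
Qed.

Definition rb_orbit (G H : zmodType) (Psi : G -> H -> H) (g : G) (h : H) n :=
  \sum_(i < n) Psi (g *+ i) h.

Section RotaBaxter.

Variables (G H : zmodType) (Psi : G -> H -> H).
Hypothesis PsiA : aut_hom Psi.

Lemma aut_homD g : {morph Psi g : x y / x + y}.
Proof. by case: PsiA => /(_ g) []. Qed.

Lemma aut_hom0 : Psi 0 =1 id.
Proof.
case: PsiA => /(_ 0) [_ [f PsiK _]] PsiM x.
by apply: (can_inj PsiK); rewrite -PsiM addr0.
Qed.

Variable B : H -> G.
Hypothesis RB : rel_RB Psi B.

Lemma rel_RB0 : B 0 = 0.
Proof.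
apply: (@addrI _ (B 0)).
by rewrite addr0 RB (morph_add0 (aut_homD _)) addr0.
Qed.

Lemma rel_RB_fixedD h k : Psi (B h) k = k -> B (h + k) = B h + B k.
Proof. by move=> fixk; rewrite RB fixk. Qed.

Lemma rel_RB_fixedMn h n : Psi (B h) h = h -> B (h *+ n) = B h *+ n.
Proof.
move=> fixh; elim: n => [|n IHn]; first by rewrite !mulr0n rel_RB0.
by rewrite !mulrS rel_RB_fixedD ?IHn // (morph_addMn (aut_homD _)) fixh.
Qed.

Lemma rel_RB_orbit h n : B (rb_orbit Psi (B h) h n) = B h *+ n.
Proof.
elim: n => [|n IHn]; first by rewrite /rb_orbit big_ord0 rel_RB0.
by rewrite /rb_orbit big_ord_recr /= -IHn -RB IHn mulrSr.
Qed.

End RotaBaxter.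

Section RotaBaxterZp_sqr.

Variables (p : nat) (G : zmodType) (Psi : G -> 'Z_(p ^ 2) -> 'Z_(p ^ 2)).
Hypotheses (pp : prime p) (expG : forall g : G, g *+ p = 0) (PsiA : aut_hom Psi).

Local Notation P := (p%:R : 'Z_(p ^ 2)).

Lemma natp_sqr_eq0 : P * P = 0.
Proof. by rewrite -natrM mulnn pchar_Zp ?prime_sqr_gt1. Qed.

Lemma exp1DP a n : (1 + P * a) ^+ n = 1 + P * a * n%:R.
Proof.
elim: n => [|n IHn]; first by rewrite expr0 mulr0 addr0.
rewrite exprSr IHn -natr1.
have -> : (1 + P * a * n%:R) * (1 + P * a) =
  1 + P * a * (n%:R + 1) + P * P * (a * a * n%:R) by ring.
by rewrite natp_sqr_eq0 mul0r addr0.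
Qed.

Lemma aut_hom_mul1 g x : Psi g x = x * Psi g 1.
Proof. exact/Zp_morph_mul1/aut_homD. Qed.

Lemma aut_hom_mulrn1 g n : Psi (g *+ n) 1 = Psi g 1 ^+ n.
Proof.
elim: n => [|n IHn]; first by rewrite mulr0n aut_hom0.
by case: PsiA => _ PsiM; rewrite mulrS PsiM IHn aut_hom_mul1 exprSr.
Qed.

Lemma aut_hom_unipotent g : exists a, Psi g 1 = 1 + P * a.
Proof. by apply: Zp_sqr_unity_root => //; rewrite -aut_hom_mulrn1 expG aut_hom0. Qed.

Lemma aut_hom_fixP g y : Psi g (P * y) = P * y.
Proof.
rewrite aut_hom_mul1; have [a ->] := aut_hom_unipotent g.
by rewrite mulrDr mulr1 mulrCA !mulrA natp_sqr_eq0 !mul0r addr0.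
Qed.

Lemma rb_orbitE b a n : Psi b 1 = 1 + P * a ->
  rb_orbit Psi b 1 n = n%:R + P * a * 'C(n, 2)%:R.
Proof.
move=> Ha; elim: n => [|n IHn]; first by rewrite /rb_orbit big_ord0 bin0n mulr0 addr0.
rewrite /rb_orbit big_ord_recr /= -/(rb_orbit _ _ _ _) IHn.
by rewrite aut_hom_mulrn1 Ha exp1DP binS bin1 natrD -natr1; ring.
Qed.

Lemma rb_orbit_modp b n : exists y, rb_orbit Psi b 1 n = n%:R + P * y.
Proof.
have [a Ha] := aut_hom_unipotent b.
by exists (a * 'C(n, 2)%:R); rewrite (rb_orbitE _ Ha) mulrA.
Qed.

Lemma Zp_sqr_decomp b (h : 'Z_(p ^ 2)) :
  exists j, h = rb_orbit Psi b 1 (h %% p) + P *+ j.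
Proof.
have [y ->] := rb_orbit_modp b (h %% p).
exists (nat_of_ord ((h %/ p)%:R - y : 'Z_(p ^ 2))).
rewrite -[P *+ _]mulr_natr natr_Zp.
by rewrite -{1}(natr_Zp h) {1}(divn_eq h p) natrD natrM; ring.
Qed.

Lemma rel_RB_orbitDP B n j : rel_RB Psi B ->
  B (rb_orbit Psi (B 1) 1 n + P *+ j) = B 1 *+ n + B P *+ j.
Proof.
move=> RB; have fixP y : Psi (B y) (P *+ j) = P *+ j.
  by rewrite -[P *+ j]mulr_natr aut_hom_fixP.
rewrite (rel_RB_fixedD RB) // (rel_RB_orbit PsiA RB) (rel_RB_fixedMn PsiA RB) //.
by rewrite -[X in Psi _ X]mulr1 aut_hom_fixP mulr1.
Qed.

Lemma rel_RB_eq B1 B2 : rel_RB Psi B1 -> rel_RB Psi B2 ->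
  B1 1 = B2 1 -> B1 P = B2 P -> B1 =1 B2.
Proof.
move=> RB1 RB2 e1 eP h; have [j ->] := Zp_sqr_decomp (B1 1) h.
by rewrite rel_RB_orbitDP // {2}e1 rel_RB_orbitDP // e1 eP.
Qed.

Lemma rb_orbit_p b : (2 < p)%N -> rb_orbit Psi b 1 p = P.
Proof.
move=> p_gt2; have [a Ha] := aut_hom_unipotent b.
have /dvdnP [c pC2] : (p %| 'C(p, 2))%N by rewrite prime_dvd_bin // p_gt2.
rewrite (rb_orbitE _ Ha) pC2 natrM.
have -> : P * a * (c%:R * P) = P * P * (a * c%:R) by ring.
by rewrite natp_sqr_eq0 mul0r addr0.
Qed.

Lemma rel_RB_mulrn B : (2 < p)%N -> rel_RB Psi B -> forall h, B h = B 1 *+ h.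
Proof.
move=> p_gt2 RB h; have [j hE] := Zp_sqr_decomp (B 1) h.
have BP0 : B P = 0 by rewrite -(rb_orbit_p (B 1)) // rel_RB_orbit.
by rewrite {1}hE rel_RB_orbitDP // BP0 mul0rn addr0 mulrn_modn.
Qed.

Lemma rel_RB_additive B : (2 < p)%N -> rel_RB Psi B -> grp_hom B.
Proof.
move=> p_gt2 RB h k; have BE := rel_RB_mulrn p_gt2 RB.
rewrite [B (h + k)]BE [B h]BE [B k]BE -mulrnDr.
have -> : h + k = (h + k)%N%:R :> 'Z_(p ^ 2) by rewrite natrD !natr_Zp.
rewrite val_Zp_nat ?prime_sqr_gt1 // -(mulrn_modn _ (expG _)) modn_dvdm ?dvdn_exp //.
by rewrite mulrn_modn.
Qed.

End RotaBaxterZp_sqr.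

Theorem theorem4p4 (p : nat) (pp : prime p)
    (Psi : ('Z_p * 'Z_p)%type -> 'Z_(p ^ 2)%N -> 'Z_(p ^ 2)%N) :
  aut_hom Psi ->
  (forall (b1 bp : ('Z_p * 'Z_p)%type) (B1 B2 : 'Z_(p ^ 2)%N -> ('Z_p * 'Z_p)%type),
      rel_RB Psi B1 -> rel_RB Psi B2 ->
      B1 1 = b1 -> B1 (p%:R) = bp ->
      B2 1 = b1 -> B2 (p%:R) = bp ->
      B1 =1 B2) /\
  ((2 < p)%N -> forall B : 'Z_(p ^ 2)%N -> ('Z_p * 'Z_p)%type,
      rel_RB Psi B -> grp_hom B).
Proof.
move=> PsiA.
have expZp (x : 'Z_p) : x *+ p = 0.
  by rewrite -mulr_natr (pchar_Zp (prime_gt1 pp)) mulr0.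
have expG (g : 'Z_p * 'Z_p) : g *+ p = 0 by rewrite pairMnE !expZp.
split=> [b1 bp B1 B2 RB1 RB2 <- <- e1 ep | p_gt2 B].
  exact: (rel_RB_eq pp expG PsiA RB1 RB2 (esym e1) (esym ep)).
exact: (rel_RB_additive pp expG PsiA p_gt2).
Qed.
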